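(* Let $(\mathcal{C},\mathbb{E},\mathfrak{s})$ satisfy (ET1), (ET2) and (ET3). If $\mathbb{F}\subseteq\mathbb{E}$ is an additive subfunctor having enough injective morphisms, then $\mathrm{Ph}(\mathbb{F})={}^{\perp_{\mathbb{E}}}(\mathbb{F}\text{-}\mathrm{inj})$.
   Context: $\mathcal{C}$ additive, $\mathbb{E}:\mathcal{C}^{\mathrm{op}}\times\mathcal{C}\to\mathrm{Ab}$ biadditive (ET1); for $\delta\in\mathbb{E}(C,A)$, $a:A\to A'$, $c:C'\to C$ put $a_\star\delta=\mathbb{E}(C,a)(\delta)$, $c^\star\delta=\mathbb{E}(c,A)(\delta)$. (ET2): $\mathfrak{s}$ is an additive realization (Nakaoka–Palu): each $\delta\in\mathbb{E}(C,A)$ is assigned an equivalence class of sequences $A\xrightarrow{x}B\xrightarrow{y}C$ (up to isomorphism of middle terms), $0$ is realized by split sequences, realization respects direct sums, and if $a_\star\delta=c^\star\delta'$ there is $b$ making the realizing sequences commute. Realized pairs are $\mathbb{E}$-triangles $A\xrightarrow{x}B\xrightarrow{y}C\overset{\delta}{\dashrightarrow}$ ($x$ an $\mathbb{E}$-inflation); such commuting triples are morphisms of $\mathbb{E}$-triangles. (ET3): given $\mathbb{E}$-triangles $A\xrightarrow{x}B\to C\overset{\delta}{\dashrightarrow}$, $A'\xrightarrow{x'}B'\to C'\overset{\delta'}{\dashrightarrow}$ and $a,b$ with $bx=x'a$, there is $c$ with $(a,b,c)$ a morphism of $\mathbb{E}$-triangles. Additive subfunctor $\mathbb{F}$: subgroups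 $\mathbb{F}(C,A)\subseteq\mathbb{E}(C,A)$ stable under $a_\star,c^\star$; $\mathbb{F}$-triangles are $\mathbb{E}$-triangles with extension in $\mathbb{F}$. $\mathrm{Ph}(\mathbb{F})$: morphisms $\varphi:X\to C$ with $\varphi^\star\delta\in\mathbb{F}(X,A)$ for all $\delta\in\mathbb{E}(C,A)$. $\mathbb{F}\text{-}\mathrm{inj}$: morphisms $i:A\to Y$ with $i_\star\delta=0$ for all $\delta\in\mathbb{F}(C,A)$. For a class $\mathcal{M}$ of morphisms, ${}^{\perp_{\mathbb{E}}}\mathcal{M}$ is the class of $g:X\to C$ with $g^\star m_\star\delta=0$ for all $m\in\mathcal{M}$, $m:A\to Y$, and all $\delta\in\mathbb{E}(C,A)$. $\mathbb{F}$ has enough injective morphisms if for every $A$ there is an $\mathbb{F}$-triangle $A\xrightarrow{e}B\to C\overset{\delta}{\dashrightarrow}$ with $e\in\mathbb{F}\text{-}\mathrm{inj}$. *)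

From HB Require Import structures.
From mathcomp Require Import all_boot all_algebra.
Set Implicit Arguments. Unset Strict Implicit. Unset Printing Implicit Defensive.
Import GRing.Theory.
Local Open Scope ring_scope.

(* binary biproducts.  [comp g f] is the composite  g o f.                *)
Record AddCat := {
  Ob : Type;
  Mor : Ob -> Ob -> zmodType;
  comp : forall {A B D : Ob}, Mor B D -> Mor A B -> Mor A D;
  idm : forall A : Ob, Mor A A;
  comp_assoc : forall (A B D G : Ob) (f : Mor A B) (g : Mor B D) (h : Mor D G),
      comp h (comp g f) = comp (comp h g) f;
  comp_idl : forall (A B : Ob) (f : Mor A B), comp (idm B) f = f;
  comp_idr : forall (A B : Ob) (f : Mor A B), comp f (idm A) = f;
  comp_addl : forall (A B D : Ob) (g g' : Mor B D) (f : Mor A B),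
      comp (g + g') f = comp g f + comp g' f;
  comp_addr : forall (A B D : Ob) (g : Mor B D) (f f' : Mor A B),
      comp g (f + f') = comp g f + comp g f';
  zob : Ob;
  zob_zero : idm zob = 0;
  bp : Ob -> Ob -> Ob;
  bi1 : forall A B : Ob, Mor A (bp A B);
  bi2 : forall A B : Ob, Mor B (bp A B);
  bp1 : forall A B : Ob, Mor (bp A B) A;
  bp2 : forall A B : Ob, Mor (bp A B) B;
  bp1i1 : forall A B : Ob, comp (bp1 A B) (bi1 A B) = idm A;
  bp2i2 : forall A B : Ob, comp (bp2 A B) (bi2 A B) = idm B;
  bp1i2 : forall A B : Ob, comp (bp1 A B) (bi2 A B) = 0;
  bp2i1 : forall A B : Ob, comp (bp2 A B) (bi1 A B) = 0;
  bp_sum : forall A B : Ob,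
      comp (bi1 A B) (bp1 A B) + comp (bi2 A B) (bp2 A B) = idm (bp A B)
}.
Arguments comp {_ _ _ _}.
Arguments idm {_}.
Arguments bp {_}.
Arguments bi1 {_}.
Arguments bi2 {_}.
Arguments bp1 {_}.
Arguments bp2 {_}.

Definition is_iso (C : AddCat) (A B : Ob C) (f : Mor A B) : Prop :=
  exists g : Mor B A, comp g f = idm A /\ comp f g = idm B.

Definition morsum (C : AddCat) (A B A' B' : Ob C) (f : Mor A B) (g : Mor A' B')
  : Mor (bp A A') (bp B B') :=
  comp (bi1 B B') (comp f (bp1 A A')) + comp (bi2 B B') (comp g (bp2 A A')).

(* (ET1): a biadditive functor  E : C^op x C -> Ab.                       *)
(* [Ext Cc A] = E(Cc, A);  [push a d] = a_* d;  [pull c d] = c^* d.       *)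
Record BiaddFunctor (C : AddCat) := {
  Ext : Ob C -> Ob C -> zmodType;
  push : forall {Cc A A' : Ob C}, Mor A A' -> Ext Cc A -> Ext Cc A';
  pull : forall {Cc' Cc A : Ob C}, Mor Cc' Cc -> Ext Cc A -> Ext Cc' A;
  push_addE : forall Cc A A' (a : Mor A A') (d d' : Ext Cc A),
      push a (d + d') = push a d + push a d';
  pull_addE : forall Cc' Cc A (c : Mor Cc' Cc) (d d' : Ext Cc A),
      pull c (d + d') = pull c d + pull c d';
  push_id : forall Cc A (d : Ext Cc A), push (idm A) d = d;
  pull_id : forall Cc A (d : Ext Cc A), pull (idm Cc) d = d;
  push_comp : forall Cc A A' A'' (a : Mor A A') (a' : Mor A' A'') (d : Ext Cc A),
      push (comp a' a) d = push a' (push a d);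
  pull_comp : forall Cc'' Cc' Cc A (c' : Mor Cc'' Cc') (c : Mor Cc' Cc) (d : Ext Cc A),
      pull (comp c c') d = pull c' (pull c d);
  push_pull : forall Cc' Cc A A' (c : Mor Cc' Cc) (a : Mor A A') (d : Ext Cc A),
      push a (pull c d) = pull c (push a d);
  push_addM : forall Cc A A' (a a' : Mor A A') (d : Ext Cc A),
      push (a + a') d = push a d + push a' d;
  pull_addM : forall Cc' Cc A (c c' : Mor Cc' Cc) (d : Ext Cc A),
      pull (c + c') d = pull c d + pull c' d
}.
Arguments Ext {_}.
Arguments push {_ _ _ _ _}.
Arguments pull {_ _ _ _ _}.

Definition extsum (C : AddCat) (E : BiaddFunctor C) (Cc A Cc' A' : Ob C)
  (d : Ext E Cc A) (d' : Ext E Cc' A') : Ext E (bp Cc Cc') (bp A A') :=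
  push (bi1 A A') (pull (bp1 Cc Cc') d) + push (bi2 A A') (pull (bp2 Cc Cc') d').

Definition equiv_seq (C : AddCat) (A B B' Cc : Ob C)
  (x : Mor A B) (y : Mor B Cc) (x' : Mor A B') (y' : Mor B' Cc) : Prop :=
  exists b : Mor B B', is_iso b /\ comp b x = x' /\ comp y' b = y.

(* (ET2): an additive realization (Nakaoka-Palu).  [realizes d x y] means *)
(* that A -x-> B -y-> Cc belongs to the class s(d); the conditions say    *)
(* that s(d) is exactly one equivalence class.                            *)
Record AddRealization (C : AddCat) (E : BiaddFunctor C) := {
  realizes : forall {Cc A : Ob C}, Ext E Cc A -> forall {B : Ob C},
      Mor A B -> Mor B Cc -> Prop;
  real_ex : forall Cc A (d : Ext E Cc A),
      exists B (x : Mor A B) (y : Mor B Cc), realizes d x y;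
  real_uniq : forall Cc A (d : Ext E Cc A) B B' (x : Mor A B) (y : Mor B Cc)
      (x' : Mor A B') (y' : Mor B' Cc),
      realizes d x y -> realizes d x' y' -> equiv_seq x y x' y';
  real_closed : forall Cc A (d : Ext E Cc A) B B' (x : Mor A B) (y : Mor B Cc)
      (x' : Mor A B') (y' : Mor B' Cc),
      realizes d x y -> equiv_seq x y x' y' -> realizes d x' y';
  real_morph : forall Cc A Cc' A' (d : Ext E Cc A) (d' : Ext E Cc' A')
      B B' (x : Mor A B) (y : Mor B Cc) (x' : Mor A' B') (y' : Mor B' Cc')
      (a : Mor A A') (c : Mor Cc Cc'),
      realizes d x y -> realizes d' x' y' -> push a d = pull c d' ->
      exists b : Mor B B', comp b x = comp x' a /\ comp y' b = comp c y;
  real_zero : forall Cc A : Ob C,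
      realizes (0 : Ext E Cc A) (bi1 A Cc) (bp2 A Cc);
  real_sum : forall Cc A Cc' A' (d : Ext E Cc A) (d' : Ext E Cc' A')
      B B' (x : Mor A B) (y : Mor B Cc) (x' : Mor A' B') (y' : Mor B' Cc'),
      realizes d x y -> realizes d' x' y' ->
      realizes (extsum d d') (morsum x x') (morsum y y')
}.
Arguments realizes {_ _} _ {_ _} _ {_}.

Definition ET3 (C : AddCat) (E : BiaddFunctor C) (s : AddRealization E) : Prop :=
  forall (A B Cc A' B' Cc' : Ob C) (d : Ext E Cc A) (d' : Ext E Cc' A')
    (x : Mor A B) (y : Mor B Cc) (x' : Mor A' B') (y' : Mor B' Cc')
    (a : Mor A A') (b : Mor B B'),
    realizes s d x y -> realizes s d' x' y' -> comp b x = comp x' a ->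
    exists c : Mor Cc Cc', comp y' b = comp c y /\ push a d = pull c d'.

Record AddSubfunctor (C : AddCat) (E : BiaddFunctor C) := {
  inF : forall Cc A : Ob C, Ext E Cc A -> Prop;
  inF0 : forall Cc A, inF (0 : Ext E Cc A);
  inF_add : forall Cc A (d d' : Ext E Cc A), inF d -> inF d' -> inF (d + d');
  inF_opp : forall Cc A (d : Ext E Cc A), inF d -> inF (- d);
  inF_push : forall Cc A A' (a : Mor A A') (d : Ext E Cc A), inF d -> inF (push a d);
  inF_pull : forall Cc' Cc A (c : Mor Cc' Cc) (d : Ext E Cc A), inF d -> inF (pull c d)
}.
Arguments inF {_ _} _ {_ _}.

Section Classes.
Variables (C : AddCat) (E : BiaddFunctor C).

Definition Ph (F : AddSubfunctor E) (X Cc : Ob C) (phi : Mor X Cc) : Prop :=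
  forall (A : Ob C) (d : Ext E Cc A), inF F (pull phi d).

Definition Finj (F : AddSubfunctor E) (A Y : Ob C) (i : Mor A Y) : Prop :=
  forall (Cc : Ob C) (d : Ext E Cc A), inF F d -> push i d = 0.

Definition perpE (M : forall A Y : Ob C, Mor A Y -> Prop)
  (X Cc : Ob C) (g : Mor X Cc) : Prop :=
  forall (A Y : Ob C) (m : Mor A Y), M A Y m ->
    forall d : Ext E Cc A, pull g (push m d) = 0.

Definition enough_inj_morphisms (s : AddRealization E) (F : AddSubfunctor E) : Prop :=
  forall A : Ob C, exists (B Cc : Ob C) (e : Mor A B) (y : Mor B Cc) (d : Ext E Cc A),
    inF F d /\ realizes s d e y /\ Finj F e.
End Classes.

From Pilot Require Import Defs.
From mathcomp Require Import all_boot all_algebra.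
Import GRing.Theory.
Local Open Scope ring_scope.
Set Implicit Arguments.
Unset Strict Implicit.

(* If [phi] is in [Ph(F)], then [phi^* m_* d = m_* (phi^* d)] with [phi^* d] in
   [F], which [m] kills.  Conversely, take an [F]-triangle
   [A -e-> B -> D ~t~>] with [e] an [F]-injective morphism.  For [phi] in the
   orthogonal class, [e_* (phi^* d) = 0], so [e] factors through the inflation
   of [phi^* d]; (ET3) applied to that factorisation exhibits [phi^* d] as a
   pullback of [t], hence as an element of [F]. *)

Lemma additive_map0 (U V : zmodType) (f : U -> V) :
  {morph f : u v / u + v} -> f 0 = 0.
Proof. by move=> fD; apply: (addrI (f 0)); rewrite -fD !addr0. Qed.

Section ExtriangulatedFacts.
Variables (C : AddCat) (E : BiaddFunctor C) (s : AddRealization E).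

Lemma pull0 (Cc' Cc A : Ob C) (c : Mor Cc' Cc) : pull c (0 : Ext E Cc A) = 0.
Proof. exact/additive_map0/pull_addE. Qed.

(* Compare the triangle of [d] with the split triangle of [0 = e_* d]. *)
Lemma push_eq0_factor_inflation (A B M Cc : Ob C) (d : Ext E Cc A)
    (x : Mor A M) (p : Mor M Cc) (e : Mor A B) :
  realizes s d x p -> push e d = 0 -> exists f : Mor M B, Defs.comp f x = e.
Proof.
move=> dR ed0.
have ed : push e d = pull (idm Cc) (0 : Ext E Cc B) by rewrite ed0 pull0.
have [b [bx _]] := real_morph dR (real_zero s Cc B) ed.
exists (Defs.comp (bp1 B Cc) b).
by rewrite -comp_assoc bx comp_assoc bp1i1 comp_idl.
Qed.

Hypothesis et3 : ET3 s.

Lemma factor_inflation_pull (A M B Cc D : Ob C) (d : Ext E Cc A) (t : Ext E D A)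
    (x : Mor A M) (p : Mor M Cc) (e : Mor A B) (y : Mor B D) (f : Mor M B) :
  realizes s d x p -> realizes s t e y -> Defs.comp f x = e ->
  exists c : Mor Cc D, d = pull c t.
Proof.
move=> dR tR fx.
have fx' : Defs.comp f x = Defs.comp e (idm A) by rewrite comp_idr.
have [c [_ dc]] := et3 dR tR fx'.
by exists c; rewrite -dc push_id.
Qed.

End ExtriangulatedFacts.

Section PhantomsAndOrthogonality.
Variables (C : AddCat) (E : BiaddFunctor C) (F : AddSubfunctor E).

Lemma Ph_perpE (X Cc : Ob C) (phi : Mor X Cc) :
  Ph F phi -> perpE E (Finj F) phi.
Proof. by move=> phiP A Y m mF d; rewrite -push_pull; exact: mF (phiP _ d). Qed.

Variables (s : AddRealization E).
Hypotheses (et3 : ET3 s) (enough_inj : enough_inj_morphisms s F).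

Lemma perpE_Ph (X Cc : Ob C) (phi : Mor X Cc) :
  perpE E (Finj F) phi -> Ph F phi.
Proof.
move=> phiO A d.
have [B [D [e [y [t [tF [tR eF]]]]]]] := enough_inj A.
have [M [x [p dR]]] := real_ex s (pull phi d).
have ed0 : push e (pull phi d) = 0 by rewrite push_pull; exact: phiO eF _.
have [f fx] := push_eq0_factor_inflation dR ed0.
have [c ->] := factor_inflation_pull et3 dR tR fx.
exact: inF_pull tF.
Qed.

End PhantomsAndOrthogonality.

Theorem proposition3p12 (C : AddCat) (E : BiaddFunctor C) (s : AddRealization E)
  (et3 : ET3 s) (F : AddSubfunctor E) (hF : enough_inj_morphisms s F) :
  forall (X Cc : Ob C) (phi : Mor X Cc),
    Ph F phi <-> perpE E (Finj F) phi.
Proof.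
by move=> X Cc phi; split; [exact: Ph_perpE | exact: (perpE_Ph et3 hF)].
Qed.
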